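(* Let $n\ge 6$ and let $G$ be a graph on $2n$ vertices with at least $n^2-1$ edges that contains no two distinct vertices of the same degree joined by a path of length three. Let $\beta$ be the largest integer such that $G$ contains two distinct vertices of degree $\beta$, and let $\Delta$ be the maximum degree of $G$. Then either $\beta\ge\Delta-1$ or $\Delta\le n+2$.
   Context: A path of length three joining vertices $a$ and $b$ is a path $a\,x\,y\,b$ with four distinct vertices and three edges. Graphs are finite and simple. *)

From mathcomp Require Import all_boot.
Set Implicit Arguments. Unset Strict Implicit. Unset Printing Implicit Defensive.

Definition simple_graph (T : finType) (e : rel T) : Prop :=
  symmetric e /\ irreflexive e.

Definition deg (T : finType) (e : rel T) (x : T) : nat := #|[set y | e x y]|.

Definition edge_set (T : finType) (e : rel T) : {set {set T}} :=
  [set s : {set T} | [exists x, exists y, e x y && (s == [set x; y])]].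

Definition num_edges (T : finType) (e : rel T) : nat := #|edge_set e|.

Definition path3 (T : finType) (e : rel T) (a b : T) : Prop :=
  exists x y : T, uniq [:: a; x; y; b] /\ e a x /\ e x y /\ e y b.

Definition max_deg (T : finType) (e : rel T) : nat := \max_(x : T) deg e x.

Definition repeated_deg (T : finType) (e : rel T) (d : nat) : Prop :=
  exists u v : T, u != v /\ deg e u = d /\ deg e v = d.

From mathcomp Require Import all_boot zify.
Set Implicit Arguments. Unset Strict Implicit. Unset Printing Implicit Defensive.

(* Let v have maximum degree D and suppose beta < D - 1 and D > n + 2, so that v
   is the only vertex of degree D.  If a vertex a has the same degree as a
   neighbour b of v, then every neighbour of a other than b is a non-neighbour of
   v (otherwise a y v b is a path of length three), so deg a <= 2n - D + 1 =: L.
   Hence, among the vertices that are neighbours of v or have degree above beta,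
   the degrees exceeding L are pairwise distinct and below D; every other vertex
   is a non-neighbour of v of degree at most beta.  Summing the degrees gives
   2 e(G) <= 2n^2 - n + 3, which is less than 2(n^2 - 1) once n >= 6. *)


Lemma sum_distinct_pos_leq_bin2 (I : finType) (A : {pred I}) (f : I -> nat) r :
    {in A &, forall x y, 0 < f x -> f x = f y -> x = y} ->
    {in A, forall x, 0 < f x -> f x < r} ->
  \sum_(x in A) f x <= 'C(r, 2).
Proof.
move=> f_inj f_lt; rewrite (bigID (fun x => 0 < f x)) /= [X in _ + X]big1 ?addn0; last first.
  by move=> x /andP[_]; rewrite -eqn0Ngt => /eqP.
rewrite -big_filter -(big_map f xpredT id) -bin2_sum.
apply: uniq_sub_le_big => //; [by move=> x y; apply: leq_addr | | exact: iota_uniq |].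
  rewrite map_inj_in_uniq ?filter_uniq ?index_enum_uniq // => x y.
  rewrite !mem_filter => /andP[/andP[xA x_pos] _] /andP[/andP[yA _] _].
  exact: f_inj.
move=> i /mapP[x]; rewrite mem_filter => /andP[/andP[xA x_pos] _] ->.
by rewrite mem_iota subn0 f_lt.
Qed.

Lemma degree_budget_lt n D m beta :
    5 < n -> n + 2 < D -> D < 2 * n -> beta < D - 1 -> m < 2 * n - D ->
  D + (2 * n - 1 - m) * (2 * n - D + 1) + m * beta + 'C(D - (2 * n - D + 1), 2)
    < 2 * (n ^ 2 - 1).
Proof.
move=> n_gt5 D_gt D_lt beta_lt m_lt.
have [k Dk] : exists k, D = n + 3 + k by exists (D - n - 3); lia.
have [p np] : exists p, n = 4 + k + m + p by exists (n - 4 - k - m); lia.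
have -> : D - (2 * n - D + 1) = (k + 2).*2.+1 by lia.
rewrite bin2odd /= ?odd_double // doubleK.
have -> : 2 * n - 1 - m = 7 + 2 * k + m + 2 * p by lia.
have -> : 2 * n - D + 1 = 2 + m + p by lia.
have : m * beta <= m * (5 + 2 * k + m + p) by rewrite leq_mul2l; lia.
move: n_gt5; rewrite Dk np; move: (m * beta) => mb; clear.
by rewrite -!mul2n expnS expn1; nia.
Qed.

Lemma handshake_leq (T : finType) (e : rel T) :
  simple_graph e -> 2 * num_edges e <= \sum_x deg e x.
Proof.
move=> [e_sym e_irr]; rewrite /num_edges.
have -> : 2 * #|edge_set e| = \sum_(s in edge_set e) #|s|.
  rewrite -sum1_card big_distrr /=; apply: eq_bigr => s.
  rewrite inE => /existsP[x /existsP[y /andP[exy /eqP ->]]].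
  by rewrite cards2 muln1; case: eqP => // xy; rewrite xy e_irr in exy.
have -> : \sum_(s in edge_set e) #|s| = \sum_(s in edge_set e) \sum_x (x \in s : nat).
  by apply: eq_bigr => s _; rewrite -sum1_card big_mkcond.
rewrite exchange_big /=; apply: leq_sum => x _.
rewrite -big_mkcondr /= sum1_card.
apply: leq_trans (leq_imset_card (fun y => [set x; y]) [set y | e x y]).
apply/subset_leq_card/subsetP => s; rewrite unfold_in inE => /andP[].
move=> /existsP[a /existsP[b /andP[eab /eqP ->]]].
rewrite !inE => /orP[] /eqP ->; first by apply/imsetP; exists b; rewrite ?inE.
by apply/imsetP; exists a; [rewrite inE e_sym | rewrite setUC].
Qed.

Section SameDegreeNoPath3.

Variables (T : finType) (e : rel T).
Hypotheses (e_sym : symmetric e) (e_irr : irreflexive e).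

Lemma deg_lt_card x : deg e x < #|T|.
Proof.
rewrite /deg -cardsT; apply/proper_card/properP.
by split; [exact: subsetT | exists x; rewrite !inE ?e_irr].
Qed.

Lemma card_non_nbhd v : #|~: [set y | e v y]| = #|T| - deg e v.
Proof. by rewrite cardsCs setCK. Qed.

Hypothesis no_path3 : forall a b, a != b -> deg e a = deg e b -> ~ path3 e a b.

Lemma nbhd_same_deg_sub a b v : a != b -> a != v -> e v b -> deg e a = deg e b ->
  [set y | e a y] \subset b |: ~: [set y | e v y].
Proof.
move=> ab av evb dab; apply/subsetP => y; rewrite !inE => eay.
rewrite orbC; case: (boolP (e v y)) => //= evy.
apply: contraT => yb; exfalso; apply: (no_path3 ab dab).
exists y, v; rewrite /= !inE !negb_or ab av yb eay (e_sym y) evy evb /=.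
have ne xy : e xy.1 xy.2 -> xy.1 != xy.2 by apply: contraTneq => ->; rewrite e_irr.
by rewrite (ne (a, y)) // (ne (y, v)) 1?e_sym // (ne (v, b)).
Qed.

Lemma deg_same_deg_leq a b v : a != b -> a != v -> e v b -> deg e a = deg e b ->
  deg e a <= #|T| - deg e v + 1.
Proof.
move=> ab av evb dab; apply: leq_trans (subset_leq_card (nbhd_same_deg_sub ab av evb dab)) _.
by rewrite cardsU1 card_non_nbhd addnC leq_add2l leq_b1.
Qed.

Variables (v : T) (beta : nat).
Hypothesis beta_max : forall x y, x != y -> deg e x = deg e y -> deg e x <= beta.
Hypothesis v_top : forall u, u != v -> deg e u < deg e v.

Let L := #|T| - deg e v + 1.
Let large u := e v u || (beta < deg e u).
Let W := [set u | (u != v) && large u].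
Let M := [set u | (u != v) && ~~ large u].

Lemma card_M : #|M| < #|T| - deg e v.
Proof.
rewrite -card_non_nbhd (cardsD1 v (~: _)) !inE e_irr add1n ltnS.
apply/subset_leq_card/subsetP => x; rewrite !inE /large negb_or.
by case/andP=> -> /andP[-> _].
Qed.

Lemma sum_deg_M : \sum_(x in M) deg e x <= #|M| * beta.
Proof.
rewrite -sum_nat_const; apply: leq_sum => x.
by rewrite inE /large negb_or -leqNgt => /and3P[_ _].
Qed.

Lemma sum_deg_W : \sum_(x in W) deg e x <= #|W| * L + 'C(deg e v - L, 2).
Proof.
apply: leq_trans (_ : \sum_(x in W) (L + (deg e x - L)) <= _).
  by apply: leq_sum => x _; rewrite -leq_subLR.
rewrite big_split /= sum_nat_const leq_add2l.
apply: sum_distinct_pos_leq_bin2 => [x y | x]; rewrite !inE; last first.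
  by case/andP=> /v_top; lia.
case/andP=> xv Px /andP[yv Py]; rewrite subn_gt0 => Lx dxy.
have {}dxy : deg e x = deg e y by lia.
apply/eqP/contraT => xy.
case/orP: Py => [evy | beta_y].
  by have := deg_same_deg_leq xy xv evy dxy; rewrite leqNgt Lx.
case/orP: Px => [evx | _].
  have yx : y != x by rewrite eq_sym.
  by have := deg_same_deg_leq yx yv evx (esym dxy); rewrite -dxy leqNgt Lx.
by have := beta_max xy dxy; rewrite leqNgt dxy beta_y.
Qed.

Lemma sum_deg_leq : exists2 m, m < #|T| - deg e v &
  \sum_x deg e x <= deg e v + (#|T| - 1 - m) * L + m * beta + 'C(deg e v - L, 2).
Proof.
exists #|M|; first exact: card_M.
have split_v F : \sum_x F x = F v + \sum_(x in W) F x + \sum_(x in M) F x.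
  rewrite (bigD1 v) //= (bigID large) /= addnA.
  by congr (_ + _ + _); apply: eq_bigl => x; rewrite !inE.
have card_WM : #|W| = #|T| - 1 - #|M|.
  by have := split_v (fun=> 1); rewrite !sum1_card; change #|xpredT| with #|T|; lia.
rewrite split_v -card_WM; have := sum_deg_W; have := sum_deg_M; lia.
Qed.

End SameDegreeNoPath3.

Theorem lemma3p3 (n : nat) (T : finType) (e : rel T) (beta : nat) :
  6 <= n ->
  simple_graph e ->
  #|T| = 2 * n ->
  n ^ 2 - 1 <= num_edges e ->
  (forall a b : T, a != b -> deg e a = deg e b -> ~ path3 e a b) ->
  repeated_deg e beta ->
  (forall d, repeated_deg e d -> d <= beta) ->
  max_deg e - 1 <= beta \/ max_deg e <= n + 2.
Proof.
move=> n_ge6 e_simple card_T edges_ge no_path3 _ beta_max.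
have [e_sym e_irr] := e_simple.
have {}beta_max x y : x != y -> deg e x = deg e y -> deg e x <= beta.
  by move=> xy dxy; apply: beta_max; exists x, y.
have [v Dv] : {v | max_deg e = deg e v} by apply: eq_bigmax; rewrite card_T; lia.
have deg_le u : deg e u <= deg e v by rewrite -Dv leq_bigmax.
rewrite Dv; have [|beta_lt] := leqP (deg e v - 1) beta; [by left | right].
rewrite leqNgt; apply/negP => D_gt.
have v_top u : u != v -> deg e u < deg e v.
  move=> uv; rewrite ltn_neqAle deg_le andbT; apply/eqP => Du.
  by have := beta_max _ _ uv Du; lia.
have [m m_lt sum_le] := sum_deg_leq e_sym e_irr no_path3 beta_max v_top.
have D_lt : deg e v < 2 * n by rewrite -card_T deg_lt_card.
rewrite card_T in m_lt sum_le.
have := leq_trans (handshake_leq e_simple) sum_le.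
move/leq_ltn_trans/(_ (degree_budget_lt n_ge6 D_gt D_lt beta_lt m_lt)).
by rewrite ltn_mul2l /= ltnNge edges_ge.
Qed.
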